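(* Let $a, b$ be positive integers with $b \le 2a$, and let $T_{a,b} = \{C_{i,1} : 1 \le i \le 2a+1\} \cup \{C_{a+1,j} : 2 \le j \le b+1\}$, of size $n = 2a+b+1$. Then on the $n \times n$ board, $$\mathrm{cp}_{\mathrm{fixed}}(T_{a,b}) = \left\lceil \frac{2a+1}{2b+1} \right\rceil.$$
   Context: For integers $i,j$, $C_{i,j}$ denotes the unit square cell in column $i$ and row $j$ of the integer grid (columns numbered left to right, rows numbered top to bottom). A polyomino is a finite set of cells; its size is its number of cells. For a polyomino $\mathcal{P}$ of size $n$ the board is $\mathbb{B} = \{C_{i,j} : 1 \le i,j \le n\}$. The shift of $\mathcal{P}$ by integers $(c,d)$ is $\mathcal{P}+(c,d) = \{C_{x+c,y+d} : C_{x,y} \in \mathcal{P}\}$; a fixed copy of $\mathcal{P}$ is any shift of $\mathcal{P}$ (no rotations). A set of polyominoes is a valid arrangement if each is contained in $\mathbb{B}$ and they are pairwise disjoint. A fixed packing of $\mathcal{P}$ is a set of fixed copies of $\mathcal{P}$ forming a valid arrangement such that adding any further fixed copy of $\mathcal{P}$ yields an invalid arrangement. The clumsy fixed packing number $\mathrm{cp}_{\mathrm{fixed}}(\mathcal{P})$ is the minimum number of polyominoes in a fixed packing of $\mathcal{P}$ on the $n \times n$ board. *)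

From Stdlib Require Import ZArith List Lia.
Import ListNotations.
Open Scope Z_scope.

(* C_{i,j} is represented by the pair (i, j): column i, row j. *)
Definition cell := (Z * Z)%type.

Definition polyomino := list cell.

Definition shift (P : polyomino) (v : Z * Z) : polyomino :=
  map (fun x : cell => (fst x + fst v, snd x + snd v)) P.

Definition in_board (n : Z) (Q : polyomino) : Prop :=
  forall x, In x Q -> 1 <= fst x <= n /\ 1 <= snd x <= n.

Definition disjoint (Q R : polyomino) : Prop :=
  forall x, In x Q -> ~ In x R.

Definition fixed_packing (P : polyomino) (n : Z) (S : list (Z * Z)) : Prop :=
  NoDup S /\
  (forall v, In v S -> in_board n (shift P v)) /\
  (forall u v, In u S -> In v S -> u <> v -> disjoint (shift P u) (shift P v)) /\
  (forall w, in_board n (shift P w) ->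
     exists v, In v S /\ ~ disjoint (shift P w) (shift P v)).

Definition cp_fixed_eq (P : polyomino) (n : Z) (k : nat) : Prop :=
  (exists S, fixed_packing P n S /\ length S = k) /\
  (forall S, fixed_packing P n S -> (k <= length S)%nat).

Definition T_ab (a b : nat) : polyomino :=
  map (fun i : nat => (Z.of_nat i, 1)) (seq 1 (2 * a + 1)) ++
  map (fun j : nat => (Z.of_nat a + 1, Z.of_nat j)) (seq 2 b).

(* The copy of T_{a,b} shifted by (c,d) occupies rows 1+d .. b+1+d and lies in
   the board exactly when 0 <= c <= b and 0 <= d <= 2a.  Copies whose row
   offsets differ by more than b are therefore disjoint, while copies whose row
   offsets differ by at most b and whose column offsets differ by at most a
   meet: the stem of the upper one pierces the bar of the lower one.
   Lower bound: the copies at offsets (0, m(2b+1)) with m(2b+1) <= 2a must each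
   meet a copy of the packing, whose row offset then lies in the window of
   radius b around m(2b+1); these windows are pairwise disjoint.
   Upper bound: copies at column offset floor(b/2) and row offsets
   b + m(2b+1), the last one clamped to 2a, are pairwise disjoint and every
   admissible row offset is within b of one of them. *)
From Pilot Require Import Defs.
From Stdlib Require Import ZArith List Lia.
Open Scope Z_scope.

Lemma count_separated_windows (r D : Z) : 2 * r < D ->
  forall (k : nat) (L : list Z),
  (forall m : nat, (m < k)%nat -> exists x, In x L /\ Z.abs (x - Z.of_nat m * D) <= r) ->
  (k <= length L)%nat.
Proof.
  intros HD; induction k as [|k IH]; intros L Hhit; [lia|].
  destruct (Hhit k ltac:(lia)) as [x [Hx Hxk]].
  enough (k <= length (remove Z.eq_dec x L))%nat
    by (pose proof (remove_length_lt Z.eq_dec L x Hx); lia).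
  apply IH; intros m Hm.
  destruct (Hhit m ltac:(lia)) as [y [Hy Hym]].
  exists y; split; [|exact Hym].
  apply in_in_remove; [|exact Hy].
  intros ->; assert (Z.of_nat m + 1 <= Z.of_nat k) by lia; nia.
Qed.

Section TPolyomino.

Variables a b : nat.

Local Notation A := (Z.of_nat a).
Local Notation B := (Z.of_nat b).
Local Notation T := (T_ab a b).
Local Notation n := (Z.of_nat (2 * a + b + 1)).

Lemma In_shift_T_ab x y c d :
  In (x, y) (Defs.shift T (c, d)) <->
  (y = 1 + d /\ 1 + c <= x <= 2 * A + 1 + c) \/
  (x = A + 1 + c /\ 2 + d <= y <= B + 1 + d).
Proof.
  unfold Defs.shift, T_ab; rewrite map_app, in_app_iff, !map_map, !in_map_iff; cbn [fst snd].
  split.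
  - intros [[i [Hi Hs]] | [i [Hi Hs]]]; apply in_seq in Hs;
      apply pair_equal_spec in Hi as [<- <-]; lia.
  - intros [[-> Hx] | [-> Hy]]; [left; exists (Z.to_nat (x - c)) | right; exists (Z.to_nat (y - d))];
      (split; [f_equal; lia | apply in_seq; lia]).
Qed.

Lemma In_shift_T_ab_rows x y c d :
  In (x, y) (Defs.shift T (c, d)) -> 1 + d <= y <= B + 1 + d.
Proof. now rewrite In_shift_T_ab; lia. Qed.

Lemma in_board_shift_T_ab c d :
  in_board n (Defs.shift T (c, d)) <-> 0 <= c <= B /\ 0 <= d <= 2 * A.
Proof.
  split.
  - intros Hin.
    pose proof (Hin (1 + c, 1 + d)) as Hleft.
    pose proof (Hin (2 * A + 1 + c, 1 + d)) as Hright.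
    pose proof (Hin (A + 1 + c, B + 1 + d)) as Htop.
    rewrite In_shift_T_ab in Hleft, Hright, Htop; cbn [fst snd] in *.
    specialize (Hleft ltac:(lia)); specialize (Hright ltac:(lia)); specialize (Htop ltac:(lia)).
    lia.
  - intros Hcd [x y] Hxy; apply In_shift_T_ab in Hxy; cbn [fst snd]; lia.
Qed.

Lemma shift_T_ab_disjoint c d c' d' :
  B < Z.abs (d - d') -> disjoint (Defs.shift T (c, d)) (Defs.shift T (c', d')).
Proof.
  intros Hdd [x y] Hxy Hxy'.
  apply In_shift_T_ab_rows in Hxy, Hxy'; lia.
Qed.

Lemma shift_T_ab_meet c d c' d' :
  Z.abs (c - c') <= A -> Z.abs (d - d') <= B ->
  ~ disjoint (Defs.shift T (c, d)) (Defs.shift T (c', d')).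
Proof.
  intros Hcc Hdd Hdis.
  destruct (Z.lt_total d d') as [Hlt | [<- | Hgt]].
  - apply (Hdis (A + 1 + c, 1 + d')); apply In_shift_T_ab; lia.
  - apply (Hdis (A + 1 + c', 1 + d)); apply In_shift_T_ab; lia.
  - apply (Hdis (A + 1 + c', 1 + d)); apply In_shift_T_ab; lia.
Qed.

Lemma fixed_packing_T_ab_length_ge (k : nat) (S : list (Z * Z)) :
  Z.of_nat k * (2 * B + 1) <= 2 * A + 2 * B + 1 ->
  fixed_packing T n S -> (k <= length S)%nat.
Proof.
  intros Hk [_ [_ [_ Hmax]]].
  rewrite <- (length_map snd S).
  apply (count_separated_windows B (2 * B + 1) ltac:(lia)).
  intros m Hm.
  destruct (Hmax (0, Z.of_nat m * (2 * B + 1))) as [[c d] [HS Hmeet]].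
  { apply in_board_shift_T_ab.
    assert (Z.of_nat m + 1 <= Z.of_nat k) by lia; nia. }
  exists d; split; [exact (in_map snd S (c, d) HS)|].
  destruct (Z_le_gt_dec (Z.abs (d - Z.of_nat m * (2 * B + 1))) B) as [Hle | Hgt]; [exact Hle|].
  exfalso; apply Hmeet, shift_T_ab_disjoint; lia.
Qed.

Definition stacked_offset (m : nat) : Z * Z :=
  (B / 2, Z.min (Z.of_nat m * (2 * B + 1) + B) (2 * A)).

Definition stacked_packing (k : nat) : list (Z * Z) := map stacked_offset (seq 0 k).

Lemma stacked_offset_in_board m : in_board n (Defs.shift T (stacked_offset m)).
Proof. apply in_board_shift_T_ab; Z.div_mod_to_equations; lia. Qed.

Section StackedPacking.

Variable k : nat.
Hypothesis k_small : Z.of_nat k * (2 * B + 1) <= 2 * A + 2 * B + 1.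
Hypothesis k_large : 2 * A < Z.of_nat k * (2 * B + 1).

Lemma stacked_offset_separated i j : (i < j < k)%nat ->
  B < snd (stacked_offset j) - snd (stacked_offset i).
Proof.
  intros Hij; unfold stacked_offset; cbn [snd].
  assert (Z.of_nat i + 1 <= Z.of_nat j /\ Z.of_nat j + 1 <= Z.of_nat k) as [Hi Hj] by lia.
  assert ((Z.of_nat i + 1) * (2 * B + 1) <= Z.of_nat j * (2 * B + 1)) by nia.
  assert ((Z.of_nat j + 1) * (2 * B + 1) <= Z.of_nat k * (2 * B + 1)) by nia.
  lia.
Qed.

Lemma stacked_offset_spread i j : (i < k)%nat -> (j < k)%nat -> i <> j ->
  B < Z.abs (snd (stacked_offset i) - snd (stacked_offset j)).
Proof.
  intros Hi Hj Hij.
  destruct (Nat.lt_total i j) as [Hlt | [Heq | Hgt]]; [| contradiction |].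
  - pose proof (stacked_offset_separated i j ltac:(lia)); lia.
  - pose proof (stacked_offset_separated j i ltac:(lia)); lia.
Qed.

Lemma stacked_offset_cover d : 0 <= d <= 2 * A ->
  exists m, (m < k)%nat /\ Z.abs (snd (stacked_offset m) - d) <= B.
Proof.
  intros Hd.
  exists (Z.to_nat (d / (2 * B + 1))); unfold stacked_offset; cbn [snd].
  assert (Hm : 0 <= d / (2 * B + 1) /\
    d / (2 * B + 1) * (2 * B + 1) <= d < d / (2 * B + 1) * (2 * B + 1) + 2 * B + 1)
    by (Z.div_mod_to_equations; nia).
  rewrite Z2Nat.id by lia.
  split; [|lia].
  assert (d / (2 * B + 1) < Z.of_nat k) by nia; lia.
Qed.

Lemma stacked_packing_fixed_packing : (b <= 2 * a)%nat ->
  fixed_packing T n (stacked_packing k).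
Proof.
  intros Hba; unfold stacked_packing; split; [|split; [|split]].
  - apply NoDup_map_NoDup_ForallPairs; [|apply seq_NoDup].
    intros i j Hi Hj Heq; apply in_seq in Hi, Hj.
    destruct (Nat.eq_dec i j) as [|Hij]; [assumption|].
    pose proof (stacked_offset_spread i j ltac:(lia) ltac:(lia) Hij); rewrite Heq in *; lia.
  - intros v Hv; apply in_map_iff in Hv as [m [<- _]]; apply stacked_offset_in_board.
  - intros u v Hu Hv Huv.
    apply in_map_iff in Hu as [i [<- Hi]], Hv as [j [<- Hj]]; apply in_seq in Hi, Hj.
    assert (Hij : i <> j) by (intros ->; contradiction).
    apply shift_T_ab_disjoint, (stacked_offset_spread i j ltac:(lia) ltac:(lia) Hij).
  - intros [c' d'] Hw; apply in_board_shift_T_ab in Hw.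
    destruct (stacked_offset_cover d' ltac:(lia)) as [m [Hm Hclose]].
    exists (stacked_offset m); split; [apply in_map, in_seq; lia|].
    unfold stacked_offset in *; apply shift_T_ab_meet; cbn [fst snd] in *;
      [Z.div_mod_to_equations|]; lia.
Qed.

End StackedPacking.

End TPolyomino.

Theorem theorem6 (a b : nat) :
  (0 < a)%nat -> (0 < b)%nat -> (b <= 2 * a)%nat ->
  cp_fixed_eq (T_ab a b) (Z.of_nat (2 * a + b + 1))
    ((2 * a + 1 + 2 * b) / (2 * b + 1))%nat.
Proof.
  intros _ _ Hba.
  pose proof (Nat.div_mod (2 * a + 1 + 2 * b) (2 * b + 1) ltac:(lia)) as Hdiv.
  pose proof (Nat.mod_upper_bound (2 * a + 1 + 2 * b) (2 * b + 1) ltac:(lia)) as Hmod.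
  set (k := ((2 * a + 1 + 2 * b) / (2 * b + 1))%nat) in *.
  assert (Hk : Z.of_nat k * (2 * Z.of_nat b + 1) <= 2 * Z.of_nat a + 2 * Z.of_nat b + 1
               < Z.of_nat k * (2 * Z.of_nat b + 1) + 2 * Z.of_nat b + 1) by lia.
  split.
  - exists (stacked_packing a b k); split.
    + apply stacked_packing_fixed_packing; lia.
    + now unfold stacked_packing; rewrite length_map, length_seq.
  - intros S HS; exact (fixed_packing_T_ab_length_ge a b k S ltac:(lia) HS).
Qed.
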